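(* Let $X$ be a real random variable and let $Y_1\sim\mathcal{N}(0,\sigma_{Y_1}^2)$, $Y_2\sim\mathcal{N}(0,\sigma_{Y_2}^2)$ with $\sigma_{Y_1}>\sigma_{Y_2}\ge0$, where $X$ is independent of $Y_1$ and $X$ is independent of $Y_2$. Then for all $\varepsilon\in\mathbb{R}$, $$\mathbb{P}[X+|Y_1|\le\varepsilon]\le\mathbb{P}[X+|Y_2|\le\varepsilon].$$
   Context: $\mathcal{N}(0,0)$ denotes the point mass at $0$. *)

From HB Require Import structures.
From mathcomp Require Import all_boot all_order all_algebra.
From mathcomp Require Import all_classical all_reals all_analysis.
Set Implicit Arguments. Unset Strict Implicit. Unset Printing Implicit Defensive.
Import Order.TTheory GRing.Theory Num.Theory.
Local Open Scope classical_set_scope.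
Local Open Scope ring_scope.

(* Centered Gaussian law N(0, s^2), parameterized by the standard deviation
   s >= 0. Following the paper's convention, N(0,0) is the point mass at 0
   (the library's [normal_prob 0 0] is NOT a point mass, hence the case split). *)
Definition gauss_law (R : realType) (s : R) : set R -> \bar R :=
  fun A => if s == 0 then \d_(0 : R) A else normal_prob 0 s A.

Definition has_law d (T : measurableType d) (R : realType)
  (P : probability T R) (Y : {RV P >-> R}) (mu : set R -> \bar R) : Prop :=
  forall A : set R, measurable A -> distribution P Y A = mu A.

Definition indep2 d (T : measurableType d) (R : realType)
  (P : probability T R) (X Y : {RV P >-> R}) : Prop :=
  forall A B : set R, measurable A -> measurable B ->
    P (X @^-1` A `&` Y @^-1` B) = (P (X @^-1` A) * P (Y @^-1` B))%E.

From HB Require Import structures.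
From mathcomp Require Import all_boot all_order all_algebra.
From mathcomp Require Import all_classical all_reals all_analysis.
From mathcomp Require Import ring lra measurable_realfun.
Set Implicit Arguments.
Unset Strict Implicit.
Unset Printing Implicit Defensive.
Import Order.TTheory GRing.Theory Num.Theory.
Import numFieldTopology.Exports numFieldNormedType.Exports.
Local Open Scope classical_set_scope.
Local Open Scope ring_scope.

(** By independence, P[X + |Y| <= eps] is the integral over the law of X of
    P[|Y| <= eps - x].  For Y ~ N(0, s^2) and u >= 0, the substitution
    y = s z gives P[|Y| <= u] = P[|Z| <= u/s] with Z standard normal, which
    is nonincreasing in s; the point mass N(0,0) gives the largest value, 1. *)

Section centered_normal.
Context {R : realType}.

Lemma normal_pdf0_scale (s x : R) : 0 < s ->
  normal_pdf 0 s (s * x) * s = normal_pdf 0 1 x.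
Proof.
move=> s_gt0.
rewrite /normal_pdf gt_eqF // oner_eq0 /normal_peak /normal_fun !subr0.
rewrite expr1n !mul1r.
have -> : - (s * x) ^+ 2 / (s ^+ 2 *+ 2) = - x ^+ 2 / 2.
  by rewrite exprMn -mulr_natr; field; rewrite gt_eqF.
rewrite -mulrnAr sqrtrM ?sqr_ge0 // sqrtr_sqr gtr0_norm // invfM.
by rewrite [_ * s]mulrC !mulrA mulfV ?gt_eqF // mul1r.
Qed.

Lemma normal_prob0_sym_itv (s u : R) : 0 < s -> 0 <= u ->
  normal_prob 0 s `[-u, u] = normal_prob 0 1 `[-(u / s), u / s].
Proof.
move=> s_gt0 u_ge0; rewrite /normal_prob.
have := @integration_by_substitution_increasing R (fun z => s * z)
  (normal_pdf 0 s) (- (u / s)) (u / s).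
rewrite mulrN mulrCA mulfV ?gt_eqF // mulr1.
have -> : (fun z => s * z)^`()%classic = cst s.
  apply/funext => x; have := derive1Ml s (@derivable_id _ _ x 1).
  by rewrite derive1_id mulr1.
move=> ->.
- by apply: eq_integral => x _; congr (_%:E); exact: normal_pdf0_scale.
- by rewrite ge0_cp // divr_ge0 // ltW.
- by move=> x y _ _ xy; rewrite ltr_pM2l.
- by move=> x _; exact: cvg_cst.
- exact: is_cvg_cst.
- exact: is_cvg_cst.
- split.
  + by move=> x _; apply: derivableM => //; exact: derivable_id.
  + by apply: cvg_at_right_filter; exact: mulrl_continuous.
  + by apply: cvg_at_left_filter; exact: mulrl_continuous.
- apply/continuous_subspaceT => x.
  exact: continuous_normal_pdf (lt0r_neq0 s_gt0) x.
Qed.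

Lemma normal_prob0_sym_itv_le (s1 s2 u : R) : 0 < s2 <= s1 -> 0 <= u ->
  (normal_prob 0 s1 `[(- u)%R, u] <= normal_prob 0 s2 `[(- u)%R, u])%E.
Proof.
move=> /andP[s2_gt0 s21] u_ge0; have s1_gt0 := lt_le_trans s2_gt0 s21.
rewrite (normal_prob0_sym_itv s1_gt0 u_ge0) (normal_prob0_sym_itv s2_gt0 u_ge0).
have us : u / s1 <= u / s2 by apply: ler_wpM2l => //; rewrite lef_pV2 ?posrE.
apply: le_measure; rewrite ?inE; try exact: measurable_itv.
by apply: subset_itv; rewrite bnd_simp ?lerN2.
Qed.

Lemma gauss_law_norm_le (s1 s2 u : R) : 0 <= s2 <= s1 ->
  (gauss_law s1 [set y : R | (`|y| <= u)%R] <=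
   gauss_law s2 [set y : R | (`|y| <= u)%R])%E.
Proof.
move=> /andP[s2_ge0 s21].
have [u_lt0|u_ge0] := ltP u 0.
  have -> : [set y : R | `|y| <= u] = set0.
    by apply/seteqP; split => y //=; rewrite leNgt (lt_le_trans u_lt0).
  by rewrite /gauss_law; case: ifP => _; case: ifP => _; rewrite !measure0.
have -> : [set y : R | `|y| <= u] = `[-u, u]%classic.
  by apply/seteqP; split => y /=; rewrite in_itv /= ler_norml.
rewrite /gauss_law; case: ifP => [/eqP s1_eq0|/negbT s1_neq0].
  have s2_eq0 : s2 = 0 by lra.
  by rewrite s2_eq0 eqxx.
have s1_gt0 : 0 < s1 by rewrite lt_def s1_neq0 (le_trans s2_ge0).
case: ifP => [_|/negbT s2_neq0].
  rewrite diracE mem_set /=; last by rewrite in_itv /= oppr_le0 u_ge0.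
  exact: probability_le1.
by apply: normal_prob0_sym_itv_le; rewrite ?lt_def ?s2_neq0 ?s2_ge0 ?s21.
Qed.

End centered_normal.

Section independent_pair.
Context d (T : measurableType d) (R : realType) (P : probability T R).
Variables X Y : {RV P >-> R}.

Definition rv_pair (w : T) : R * R := (X w, Y w).

Lemma measurable_rv_pair : measurable_fun setT rv_pair.
Proof. exact: measurable_fun_pair. Qed.

HB.instance Definition _ :=
  isMeasurableFun.Build _ _ _ _ rv_pair measurable_rv_pair.

Lemma indep2_distribution_pair (S : set (R * R)) : indep2 X Y -> measurable S ->
  distribution P rv_pair S = (distribution P X \x distribution P Y)%E S.
Proof.
by move=> XY mS; apply/esym/(product_measure_unique _ mS) => A B; exact: XY.
Qed.

Lemma indep2_prob_pairE (S : set (R * R)) : indep2 X Y -> measurable S ->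
  P (rv_pair @^-1` S) = (\int[distribution P X]_x distribution P Y (xsection S x))%E.
Proof. exact: indep2_distribution_pair. Qed.

End independent_pair.

Section add_norm_le.
Context {R : realType}.
Variable eps : R.

Definition add_norm_le := [set p : R * R | p.1 + `|p.2| <= eps].

Lemma measurable_add_norm_le : measurable add_norm_le.
Proof.
have mf : measurable_fun setT (fun p : R * R => p.1 + `|p.2|).
  apply: measurable_funD; first exact: measurable_fst.
  by apply: measurableT_comp => //; exact: measurable_snd.
have := mf measurableT _ (measurable_itv `]-oo, eps]).
by rewrite setTI; congr measurable; apply/seteqP; split => p /=; rewrite in_itv.
Qed.

Lemma xsection_add_norm_le (x : R) :
  xsection add_norm_le x = [set y : R | `|y| <= eps - x].
Proof.
by apply/seteqP; split => y; rewrite /xsection /add_norm_le /= inE /= lerBrDl.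
Qed.

End add_norm_le.

Theorem lemma4 (d : measure_display) (T : measurableType d) (R : realType)
  (P : probability T R) (X Y1 Y2 : {RV P >-> R}) (s1 s2 : R)
  (hs : s2 < s1) (hs2 : 0 <= s2)
  (hY1 : has_law Y1 (gauss_law s1)) (hY2 : has_law Y2 (gauss_law s2))
  (hXY1 : indep2 X Y1) (hXY2 : indep2 X Y2) (eps : R) :
  (P [set w | (X w + `|Y1 w| <= eps)%R] <= P [set w | (X w + `|Y2 w| <= eps)%R])%E.
Proof.
have mS := measurable_add_norm_le eps.
rewrite (indep2_prob_pairE hXY1 mS) (indep2_prob_pairE hXY2 mS).
apply: ge0_le_integral => //.
- exact: measurable_fun_xsection.
- exact: measurable_fun_xsection.
move=> x _; have mSx := measurable_xsection x mS.
rewrite hY1 // hY2 // xsection_add_norm_le.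
by apply: gauss_law_norm_le; rewrite hs2 ltW.
Qed.
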